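(* Let $T$ be a finite rooted tree each of whose nodes $v$ carries a label $\ell(v)\in\mathbb{N}=\{1,2,\dots\}$. For $i\in\mathbb{N}$ let $p_i$ denote the $i$-th prime number. For each node $v$ let $n_v$ be the number of vertices in the subtree $T_v$ rooted at $v$, and define $C_v(x)\in\mathbb{Z}[x]$ inductively by $C_v(x)=x+p_{\ell(v)}$ if $v$ is a leaf, and $C_v(x)=x^{n_v}+p_{\ell(v)}\,x\prod_{u\text{ child of }v}C_u(x)+p_{\ell(v)}$ if $v$ is an internal node. Then for every vertex $v$ of $T$, $C_v(x)$ is irreducible over $\mathbb{Q}$.
   Context: $T_v$ consists of $v$ and all its descendants; $p_1=2,p_2=3,\dots$. *)

From HB Require Import structures.
From mathcomp Require Import all_boot all_order all_algebra.
Set Implicit Arguments. Unset Strict Implicit. Unset Printing Implicit Defensive.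
Import Order.TTheory GRing.Theory Num.Theory.

Inductive ltree : Type := Node of nat & seq ltree.

Definition label (t : ltree) : nat := let: Node l _ := t in l.
Definition children (t : ltree) : seq ltree := let: Node _ cs := t in cs.

Fixpoint labels_pos (t : ltree) : bool :=
  let: Node l cs := t in (0 < l) && all labels_pos cs.

Fixpoint tsize (t : ltree) : nat :=
  let: Node _ cs := t in (sumn (map tsize cs)).+1.

Fixpoint subtrees (t : ltree) : seq ltree :=
  let: Node _ cs := t in t :: flatten (map subtrees cs).

(* p_i : the i-th prime, p_1 = 2, p_2 = 3, ... *)
Lemma next_prime_ex (m : nat) : exists p, (m < p) && prime p.
Proof. case: (prime_above m) => p H1 H2; exists p; by rewrite H1 H2. Qed.

Definition next_prime (m : nat) : nat := ex_minn (next_prime_ex m).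

Fixpoint ith_prime (i : nat) : nat :=
  match i with 0 => 1 | k.+1 => next_prime (ith_prime k) end.

Local Open Scope ring_scope.

Fixpoint Cpoly (t : ltree) : {poly int} :=
  let: Node l cs := t in
  let p : {poly int} := ((ith_prime l)%:R)%:P in
  if cs is [::] then 'X + p
  else 'X^(tsize t) + p * 'X * \prod_(q <- map Cpoly cs) q + p.

(* v is (the subtree T_v at) a vertex of t *)
Fixpoint vertex_of (t v : ltree) : Prop :=
  let: Node _ cs := t in v = t \/ foldr (fun c P => vertex_of c v \/ P) False cs.

(* Every C_v is an Eisenstein polynomial at the prime p = p_l(v): C_v = x^n + p x P + p
   with n = n_v and deg P < n, because the children's polynomials have total degree
   n_v - 1. Every coefficient except the leading one 1 + p P_(n-1) is a multiple of p,
   and the constant term is p itself. *)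

From Pilot Require Import Defs.
From Stdlib Require List.
From mathcomp Require Import all_boot all_algebra.
Import GRing.Theory.
Local Open Scope ring_scope.

Definition eisenstein_form (p n : nat) (P : {poly int}) : {poly int} :=
  'X^n + (p%:R)%:P * 'X * P + (p%:R)%:P.

Section EisensteinForm.

Variables (p n : nat) (P : {poly int}).

Local Notation q := (eisenstein_form p n P).

Lemma coef_eisenstein_form i :
  q`_i = (i == n)%:R + (if i is j.+1 then p%:R * P`_j else p%:R).
Proof.
rewrite !coefD coefXn -mulrA coefCM coefXM coefC.
by case: i => [|i]; rewrite ?mulr0 ?addr0 ?add0r.
Qed.

Lemma dvdz_coef_eisenstein_form i : i != n -> (p %| q`_i)%Z.
Proof.
move/negbTE=> ne_in; rewrite coef_eisenstein_form ne_in add0r natz.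
by case: i {ne_in} => [|i]; rewrite ?dvdz_mulr ?dvdzz.
Qed.

Lemma size_eisenstein_form_leq : (size P <= n)%N -> (size q <= n.+1)%N.
Proof.
move=> sizeP; apply/leq_sizeP => i lt_ni.
rewrite coef_eisenstein_form (gtn_eqF lt_ni) add0r.
by case: i lt_ni => // i lt_ni; rewrite (leq_sizeP _ _ sizeP) ?mulr0.
Qed.

Hypotheses (p_prime : prime p) (n_gt0 : (0 < n)%N) (sizeP : (size P <= n)%N).

Lemma ndvdz_coefn_eisenstein_form : ~~ (p %| q`_n)%Z.
Proof.
rewrite coef_eisenstein_form eqxx; case: n n_gt0 => // m _.
rewrite rpredDr ?natz ?dvdz_mulr ?dvdzz // dvdz1 /=.
by rewrite (eqn_leq p 1) leqNgt prime_gt1.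
Qed.

Lemma size_eisenstein_form : size q = n.+1.
Proof.
apply/eqP; rewrite eqn_leq size_eisenstein_form_leq //=.
by rewrite ltnNge; apply: contra ndvdz_coefn_eisenstein_form => /leq_sizeP->.
Qed.

Lemma eisenstein_form_irreducible : irreducible_poly q.
Proof.
apply: (@eisenstein_crit p) => //.
- by rewrite size_eisenstein_form eqSS -lt0n.
- by rewrite lead_coefE size_eisenstein_form ndvdz_coefn_eisenstein_form.
- rewrite coef_eisenstein_form (ltn_eqF n_gt0) add0r natz dvdzE !absz_nat natrXE.
  by rewrite -{2}(expn1 p) dvdn_Pexp2l ?(prime_gt1 p_prime).
- move=> i; rewrite size_eisenstein_form => lt_in.
  by rewrite dvdz_coef_eisenstein_form ?ltn_eqF.
Qed.

End EisensteinForm.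

Lemma ith_prime_prime i : (0 < i)%N -> prime (ith_prime i).
Proof. by case: i => // i _ /=; rewrite /next_prime; case: ex_minnP => m /andP[]. Qed.

Fixpoint ltree_nested_ind (P : ltree -> Prop)
    (IH : forall l cs, List.Forall P cs -> P (Node l cs)) (t : ltree) : P t :=
  let: Node l cs := t in
  IH l cs ((fix children_ind cs : List.Forall P cs :=
    if cs is c :: cs' then
      @List.Forall_cons _ P c cs' (ltree_nested_ind P IH c) (children_ind cs')
    else List.Forall_nil P) cs).

Lemma labels_pos_vertex t v : labels_pos t -> vertex_of t v -> labels_pos v.
Proof.
elim/ltree_nested_ind: t => l cs IH /= /andP[l_gt0 pos_cs] [->|].
  by rewrite /= l_gt0.
elim: cs IH pos_cs => [|c cs IHcs] //= /List.Forall_cons_iff[IHc IH] /andP[pos_c pos_cs].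
by case=> [/(IHc pos_c) | /(IHcs IH pos_cs)].
Qed.

(* A leaf has C = x + p = x^1 + p x 0 + p: its cofactor is 0, not the empty product. *)
Definition Cpoly_cofactor (t : ltree) : {poly int} :=
  if children t is [::] then 0 else \prod_(q <- map Cpoly (children t)) q.

Lemma CpolyE t :
  Cpoly t = eisenstein_form (ith_prime (label t)) (Defs.tsize t) (Cpoly_cofactor t).
Proof. by case: t => l [|c cs] //=; rewrite /eisenstein_form mulr0 addr0 expr1. Qed.

Lemma size_prod_Cpoly cs :
    List.Forall (fun c => size (Cpoly_cofactor c) <= Defs.tsize c)%N cs ->
  (size (\prod_(q <- map Cpoly cs) q)%R <= (sumn (map Defs.tsize cs)).+1)%N.
Proof.
elim: cs => [|c cs IHcs]; first by rewrite big_nil size_poly1.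
case/List.Forall_cons_iff=> size_c /IHcs size_cs.
have := size_eisenstein_form_leq (ith_prime (label c)) _ _ size_c.
rewrite -CpolyE => {}size_c.
rewrite /= big_cons; apply: leq_trans (size_polyMleq _ _) _.
by rewrite -subn1 leq_subLR add1n -addnS -addSn leq_add.
Qed.

Lemma size_Cpoly_cofactor t : (size (Cpoly_cofactor t) <= Defs.tsize t)%N.
Proof.
elim/ltree_nested_ind: t => l [|c cs] IH; first by rewrite size_poly0.
exact: size_prod_Cpoly.
Qed.

Theorem mainTheorem4 (T : ltree) :
  labels_pos T ->
  forall v : ltree, vertex_of T v ->
    irreducible_poly (map_poly (intr : int -> rat) (Cpoly v)).
Proof.
move=> posT v /(labels_pos_vertex _ _ posT) posv.
rewrite CpolyE; apply/irreducible_rat_int/eisenstein_form_irreducible.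
- by apply: ith_prime_prime; case: v posv => l cs /andP[].
- by case: v {posv}.
- exact: size_Cpoly_cofactor.
Qed.
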